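(* Let $\bar d=2^S$ with $S\ge1$, let $\bar\phi\in\mathcal S(\bar d)$, let $T\in\mathbb N_+$ and $\bar p_1,\dots,\bar p_T\in\Delta(\bar d)$. Then for every scale $s\in[1:S]$, $$\sum_{l=1}^{2^{S-s}}\Big(\frac{1}{|I^{(s,l)}|}\sum_{j=1}^{\bar d}\big|\langle\bar\phi,h^{(s,l)}\otimes e^{(j)}\rangle\big|\Big)\sqrt{1+\sum_{t=1}^T\sum_{i\in I^{(s,l)}}\bar p_{t,i}}\ \le\ \sqrt{\sum_{i=1}^{\bar d-1}\mathbf 1[\bar\phi_i\neq\bar\phi_{i+1}]}\cdot\sqrt{\bar d+T}.$$
   Context: $\Delta(n)=\{p\ge0,\|p\|_1=1\}$; $\mathcal S(n)$ is the set of $n\times n$ right stochastic matrices; $\bar\phi_i$ is the $i$-th row; $\langle x,y\rangle=\sum_{i,j}x_{i,j}y_{i,j}$; $(u\otimes v)_{i,j}=u_iv_j$; $e^{(j)}$ is the $j$-th standard basis vector; $[a:b]=\{a,\dots,b\}$. For $s\in[1:S]$, $l\in[1:2^{S-s}]$, the Haar vector $h^{(s,l)}\in\mathbb R^{\bar d}$ has entries $1$ on $[2^s(l-1)+1:2^s(l-1)+2^{s-1}]$, $-1$ on $[2^s(l-1)+2^{s-1}+1:2^sl]$, and $0$ elsewhere; its support is $I^{(s,l)}=[2^s(l-1)+1:2^sl]$. *)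

From mathcomp Require Import all_boot all_order all_algebra.
From mathcomp Require Import reals.
Set Implicit Arguments. Unset Strict Implicit. Unset Printing Implicit Defensive.
Import Order.TTheory GRing.Theory Num.Theory.
Local Open Scope ring_scope.

(* Indices are 0-based: paper index i in [1:n] corresponds to ordinal i-1. *)

Definition right_stochastic (R : realType) (n : nat) (phi : 'M[R]_n) : Prop :=
  (forall i j, 0 <= phi i j) /\ (forall i, \sum_(j < n) phi i j = 1).

Definition in_simplex (R : realType) (n : nat) (p : 'I_n -> R) : Prop :=
  (forall i, 0 <= p i) /\ \sum_(i < n) p i = 1.

Definition haar (R : realType) (S s l : nat) (i : 'I_(2 ^ S)) : R :=
  let a := (2 ^ s * (l - 1))%N in
  let i1 := (i : nat).+1 in
  if (a < i1 <= a + 2 ^ (s - 1))%N then 1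
  else if (a + 2 ^ (s - 1) < i1 <= 2 ^ s * l)%N then -1
  else 0.

Definition haar_supp (S s l : nat) : {set 'I_(2 ^ S)} :=
  [set i : 'I_(2 ^ S) | (2 ^ s * (l - 1) < (i : nat).+1 <= 2 ^ s * l)%N].

Definition haar_coef (R : realType) (S s l : nat) (phi : 'M[R]_(2 ^ S))
    (j : 'I_(2 ^ S)) : R :=
  \sum_(i < 2 ^ S) \sum_(k < 2 ^ S)
     phi i k * (@haar R S s l i * (if k == j then 1 else 0)).

Definition num_switches (R : realType) (n : nat) (phi : 'M[R]_n) : nat :=
  #|[set ik : 'I_n * 'I_n |
      ((ik.2 : nat) == (ik.1 : nat).+1) && (row ik.1 phi != row ik.2 phi)]|.

(* By Cauchy--Schwarz the left-hand side is at most
   sqrt (sum_l c_l^2) * sqrt (sum_l (1 + mass of block l)).  The blocks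
   I^(s,l) are disjoint, so the masses add up to at most T, and there are
   2^(S-s) <= 2^S blocks.  Each weight c_l lies in [0, 1] since |h| <= 1 on the
   block and the rows of phi sum to 1.  Moreover c_l = 0 unless a switch
   phi_i <> phi_(i+1) starts in block l: otherwise all rows of phi in the block
   coincide and the Haar vector has zero sum.  Hence c_l^2 is bounded by the
   number of switches starting in block l, and these numbers add up to at most
   the total number of switches. *)

From mathcomp Require Import all_boot all_order all_algebra.
From mathcomp Require Import reals.
From mathcomp Require Import zify ring.
Set Implicit Arguments. Unset Strict Implicit. Unset Printing Implicit Defensive.
Import Order.TTheory GRing.Theory Num.Theory.
Local Open Scope ring_scope.

Lemma lagrange_identity (R : comPzRingType) (I : Type) (r : seq I) (x y : I -> R) :
  \sum_(l <- r) \sum_(m <- r) (x l * y m - x m * y l) ^+ 2 =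
  2 * ((\sum_(l <- r) x l ^+ 2) * (\sum_(l <- r) y l ^+ 2)
       - (\sum_(l <- r) x l * y l) ^+ 2).
Proof.
have sqrE l m : (x l * y m - x m * y l) ^+ 2 =
    x l ^+ 2 * y m ^+ 2 + y l ^+ 2 * x m ^+ 2 - 2 * ((x l * y l) * (x m * y m)).
  by ring.
under eq_bigr do under eq_bigr do rewrite sqrE.
rewrite expr2 mulr_suml.
under eq_bigr do rewrite !big_split /= sumrN -!mulr_sumr.
rewrite !big_split /= sumrN -!mulr_suml -mulr_sumr -mulr_suml.
ring.
Qed.

Lemma sum_mul_le_sqrt_sum_sqr (R : rcfType) (I : Type) (r : seq I) (x y : I -> R) :
  \sum_(l <- r) x l * y l <=
  Num.sqrt (\sum_(l <- r) x l ^+ 2) * Num.sqrt (\sum_(l <- r) y l ^+ 2).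
Proof.
have sqr_sum_ge0 (z : I -> R) : 0 <= \sum_(l <- r) z l ^+ 2.
  by apply: sumr_ge0 => l _; exact: sqr_ge0.
have : 0 <= \sum_(l <- r) \sum_(m <- r) (x l * y m - x m * y l) ^+ 2.
  by apply: sumr_ge0 => l _; exact: sqr_sum_ge0.
rewrite lagrange_identity pmulr_rge0 // subr_ge0 => sqr_le.
rewrite -sqrtrM ?sqr_sum_ge0 //; apply: le_trans (ler_norm _) _.
by rewrite -sqrtr_sqr ler_sqrt // mulr_ge0 ?sqr_sum_ge0.
Qed.

Lemma mulnBl1 (m l : nat) : (0 < l)%N -> (m * l = m * (l - 1) + m)%N.
Proof. by move=> l_gt0; rewrite -mulnSr subn1 prednK. Qed.

Lemma sum_nat_interval_indicator (R : pzSemiRingType) (n a b : nat) :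
  (a <= b <= n)%N -> \sum_(i < n) ((a <= i < b)%N%:R : R) = (b - a)%:R.
Proof.
move=> /andP[ab bn]; rewrite -(big_mkord xpredT (fun i => ((a <= i < b)%N%:R : R))).
rewrite (big_cat_nat (leq0n a) (leq_trans ab bn)) (big_cat_nat ab bn) /=.
rewrite (@eq_big_nat _ _ _ 0 a _ (fun=> 0)) => [|i /andP[_ ia]]; last by rewrite leqNgt ia.
rewrite (@eq_big_nat _ _ _ a b _ (fun=> 1)) => [|i ->] //.
rewrite (@eq_big_nat _ _ _ b n _ (fun=> 0)) => [|i /andP[bi _]]; last by rewrite ltnNge bi andbF.
by rewrite !sumr_const_nat !mul0rn add0r addr0.
Qed.

Lemma norm_natrB_bool_le (R : numDomainType) (b1 b2 b : bool) :
  b1 ==> b -> b2 ==> b -> `|b1%:R - b2%:R : R| <= b%:R.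
Proof.
by case: b1; case: b2; case: b; rewrite //= ?subrr ?subr0 ?sub0r ?normrN ?normr1 ?normr0.
Qed.

Lemma eq_on_interval_of_succ (T : Type) n (f : 'I_n -> T) (lo hi : nat) :
  (forall i k : 'I_n, k = i.+1 :> nat -> (lo <= i)%N -> (k < hi)%N -> f i = f k) ->
  forall i k : 'I_n, (lo <= i < hi)%N -> (lo <= k < hi)%N -> f i = f k.
Proof.
move=> f_succ; suff f_up d : forall i k : 'I_n, k = (i + d)%N :> nat ->
    (lo <= i)%N -> (k < hi)%N -> f i = f k.
  move=> i k /andP[lo_i i_hi] /andP[lo_k k_hi]; have [ik|ki] := leqP i k.
    by apply: (f_up (k - i)%N) => //; rewrite subnKC.
  by symmetry; apply: (f_up (i - k)%N) => //; rewrite subnKC // ltnW.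
elim: d => [|d IHd] i k k_def lo_i k_hi.
  by congr f; apply: val_inj; rewrite /= k_def addn0.
have k'_lt : (i + d < n)%N by have := ltn_ord k; lia.
rewrite (IHd i (Ordinal k'_lt)) //=; last by lia.
by apply: f_succ => /=; lia.
Qed.

Lemma sum_card_le_card (T : finType) (I : Type) (r : seq I) (A : {set T})
    (P : I -> pred T) :
  (forall x, x \in A -> (\sum_(l <- r) P l x <= 1)%N) ->
  (\sum_(l <- r) #|[set x in A | P l x]| <= #|A|)%N.
Proof.
move=> P_le1; have cardE l : #|[set x in A | P l x]| = (\sum_(x in A) P l x)%N.
  rewrite -sum1_card big_mkcond [RHS]big_mkcond; apply: eq_bigr => x _.
  by rewrite inE; case: (x \in A); case: (P l x).
under eq_bigr do rewrite cardE.
by rewrite exchange_big -sum1_card; apply: leq_sum => x /P_le1.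
Qed.

Section HaarBlocks.

Variables (S s : nat).
Hypothesis s_gt0 : (0 < s)%N.

Local Notation base l := (2 ^ s * (l - 1))%N.
Local Notation half := (2 ^ (s - 1))%N.

Lemma expn_half : (2 ^ s = half + half)%N.
Proof. by case: s s_gt0 => // s' _; rewrite subn1 expnS mul2n addnn. Qed.

Lemma block_end_le l : (s <= S)%N -> (l <= 2 ^ (S - s))%N -> (2 ^ s * l <= 2 ^ S)%N.
Proof. by move=> sS lN; rewrite -(subnKC sS) expnD leq_mul2l lN orbT. Qed.

Lemma mem_haar_supp l (i : 'I_(2 ^ S)) : (0 < l)%N ->
  (i \in haar_supp S s l) = (base l <= i < base l + 2 ^ s)%N.
Proof. by move=> l_gt0; rewrite inE ltnS -mulnBl1. Qed.

Lemma mem_haar_supp_div l (i : 'I_(2 ^ S)) : (0 < l)%N ->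
  (i \in haar_supp S s l) = (i %/ 2 ^ s == l - 1)%N.
Proof.
move=> l_gt0; have m_gt0 : (0 < 2 ^ s)%N by rewrite expn_gt0.
rewrite mem_haar_supp // eqn_leq leq_divRL // -[(i %/ _ <= _)%N]ltnS ltn_divLR //.
by rewrite mulSn andbC addnC !(mulnC (2 ^ s)%N).
Qed.

Lemma sum_haar_supp_le1 N (i : 'I_(2 ^ S)) :
  (\sum_(1 <= l < N.+1) (i \in haar_supp S s l) <= 1)%N.
Proof.
rewrite big_add1 /=; under eq_bigr do rewrite mem_haar_supp_div // subn1 /= eq_sym.
rewrite (eq_bigr (fun l => if l == i %/ 2 ^ s then 1 else 0)%N); last by move=> l _; case: eqP.
by rewrite -big_mkcond sum1_count count_uniq_mem ?iota_uniq ?leq_b1.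
Qed.

Lemma sum_haar_block_le (R : numDomainType) N (q : 'I_(2 ^ S) -> R) :
  (forall i, 0 <= q i) ->
  \sum_(1 <= l < N.+1) \sum_(i in haar_supp S s l) q i <= \sum_i q i.
Proof.
move=> q_ge0; have blockE l : \sum_(i in haar_supp S s l) q i =
    \sum_i (i \in haar_supp S s l)%:R * q i.
  by rewrite big_mkcond; apply: eq_bigr => i _; case: (_ \in _); rewrite ?mul1r ?mul0r.
under eq_bigr do rewrite blockE; rewrite exchange_big /=; apply: ler_sum => i _.
by rewrite -mulr_suml -natr_sum ler_piMl // lern1 sum_haar_supp_le1.
Qed.

Variable R : realType.

Lemma haarE l (i : 'I_(2 ^ S)) : (0 < l)%N ->
  @haar R S s l i =
  (base l <= i < base l + half)%N%:R - (base l + half <= i < base l + 2 ^ s)%N%:R.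
Proof.
move=> l_gt0; rewrite /haar /= !ltnS (mulnBl1 (2 ^ s) l_gt0).
have : ~~ ((base l <= i < base l + half) && (base l + half <= i < base l + 2 ^ s))%N.
  by apply/negP; lia.
by case: (base l <= i < _)%N; case: (_ <= i < base l + 2 ^ s)%N; rewrite ?subr0 ?sub0r ?subrr.
Qed.

Lemma norm_haar_le l (i : 'I_(2 ^ S)) : (0 < l)%N ->
  `|@haar R S s l i| <= (i \in haar_supp S s l)%:R.
Proof.
move=> l_gt0; rewrite haarE // mem_haar_supp //; have := expn_half.
by move=> m_half; apply: norm_natrB_bool_le; apply/implyP; lia.
Qed.

Lemma haar_eq0 l (i : 'I_(2 ^ S)) : (0 < l)%N ->
  i \notin haar_supp S s l -> @haar R S s l i = 0.
Proof.
move=> l_gt0 /negbTE i_out; apply/normr0_eq0/eqP.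
by rewrite eq_le normr_ge0 andbT -[X in _ <= X]/(false%:R) -i_out norm_haar_le.
Qed.

Lemma sum_haar l : (s <= S)%N -> (0 < l <= 2 ^ (S - s))%N ->
  \sum_(i < 2 ^ S) @haar R S s l i = 0.
Proof.
move=> sS /andP[l_gt0 lN]; have := block_end_le sS lN.
rewrite (mulnBl1 _ l_gt0) => end_le; under eq_bigr do rewrite haarE //.
rewrite sumrB !sum_nat_interval_indicator; last 2 first.
1,2: by move: expn_half; lia.
have -> : (base l + 2 ^ s - (base l + half) = base l + half - base l)%N.
  by move: expn_half; lia.
by rewrite subrr.
Qed.

End HaarBlocks.

Definition switches (R : eqType) n (phi : 'M[R]_n) : {set 'I_n * 'I_n} :=
  [set ik : 'I_n * 'I_n | ((ik.2 : nat) == (ik.1 : nat).+1) && (row ik.1 phi != row ik.2 phi)].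

Definition haar_weight (R : realType) S s l (phi : 'M[R]_(2 ^ S)) : R :=
  (#|haar_supp S s l|%:R)^-1 * \sum_(j < 2 ^ S) `|@haar_coef R S s l phi j|.

Lemma haar_coefE (R : realType) S s l (phi : 'M[R]_(2 ^ S)) j :
  @haar_coef R S s l phi j = \sum_i phi i j * @haar R S s l i.
Proof.
apply: eq_bigr => i _; rewrite (bigD1 j) //= eqxx mulr1 big1 ?addr0 //.
by move=> k /negbTE ->; rewrite !mulr0.
Qed.

Section HaarWeight.

Variables (R : realType) (S s : nat) (phi : 'M[R]_(2 ^ S)).
Hypotheses (s_gt0 : (0 < s)%N) (s_le : (s <= S)%N).

Lemma haar_coef_eq0 l j : (0 < l <= 2 ^ (S - s))%N ->
  (forall ik, ik \in switches phi -> ik.1 \notin haar_supp S s l) ->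
  @haar_coef R S s l phi j = 0.
Proof.
move=> l_range no_switch; have /andP[l_gt0 lN] := l_range.
set lo := (2 ^ s * (l - 1))%N; have m_gt0 : (0 < 2 ^ s)%N by rewrite expn_gt0.
have lo_lt : (lo < 2 ^ S)%N.
  by have := block_end_le s_le lN; rewrite (mulnBl1 _ l_gt0) -/lo; lia.
have row_supp i : i \in haar_supp S s l -> phi i j = phi (Ordinal lo_lt) j.
  move=> i_supp; have rowE : row i phi = row (Ordinal lo_lt) phi.
    apply: (@eq_on_interval_of_succ _ _ (fun i => row i phi) lo (lo + 2 ^ s)%N).
    - move=> i' k' k'_succ lo_i' k'_hi; apply/eqP/negPn/negP => row_neq.
      have sw : (i', k') \in switches phi by rewrite inE /= k'_succ eqxx.
      by have := no_switch _ sw; rewrite /= mem_haar_supp //; lia.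
    - by rewrite -mem_haar_supp.
    - by rewrite /=; lia.
  by have := congr1 (fun r : 'rV_(2 ^ S) => r 0 j) rowE; rewrite !mxE.
rewrite haar_coefE (eq_bigr (fun i => phi (Ordinal lo_lt) j * @haar R S s l i)).
  by rewrite -mulr_sumr sum_haar ?mulr0.
move=> i _; have [/row_supp -> //|i_out] := boolP (i \in haar_supp S s l).
by rewrite haar_eq0 // !mulr0.
Qed.

Hypothesis phi_stoch : right_stochastic phi.

Lemma sum_norm_haar_coef_le l : (0 < l)%N ->
  \sum_j `|@haar_coef R S s l phi j| <= #|haar_supp S s l|%:R.
Proof.
move=> l_gt0; have [phi_ge0 phi_row1] := phi_stoch.
apply: (@le_trans _ _ (\sum_j \sum_i phi i j * (i \in haar_supp S s l)%:R)).
  apply: ler_sum => j _; rewrite haar_coefE; apply: le_trans (ler_norm_sum _ _ _) _.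
  by apply: ler_sum => i _; rewrite normrM ger0_norm // ler_wpM2l // norm_haar_le.
rewrite exchange_big -sum1_card natr_sum [leRHS]big_mkcond /=.
by apply: ler_sum => i _; rewrite -mulr_suml phi_row1 mul1r; case: (_ \in _).
Qed.

Lemma haar_weight_ge0 l : 0 <= haar_weight s l phi.
Proof. by rewrite mulr_ge0 ?invr_ge0 ?ler0n ?sumr_ge0 // => j _; exact: normr_ge0. Qed.

Lemma haar_weight_le1 l : (0 < l)%N -> haar_weight s l phi <= 1.
Proof.
move=> l_gt0; rewrite /haar_weight; have [->|card_gt0] := posnP #|haar_supp S s l|.
  by rewrite invr0 mul0r ler01.
by rewrite mulrC ler_pdivrMr ?mul1r ?ltr0n ?sum_norm_haar_coef_le.
Qed.

Lemma sqr_haar_weight_le l : (0 < l <= 2 ^ (S - s))%N ->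
  haar_weight s l phi ^+ 2 <=
  #|[set ik in switches phi | ik.1 \in haar_supp S s l]|%:R.
Proof.
move=> l_range; have /andP[l_gt0 _] := l_range.
have [card0|card_gt0] := posnP #|[set ik in switches phi | ik.1 \in haar_supp S s l]|.
  rewrite card0 /haar_weight big1 ?mulr0 ?expr0n // => j _.
  rewrite haar_coef_eq0 ?normr0 // => ik ik_sw; apply/negP => ik_supp.
  by move/eqP: card0; rewrite cards_eq0 => /eqP/setP/(_ ik); rewrite in_set ik_sw ik_supp in_set0.
have weight_le1 := haar_weight_le1 l_gt0.
by rewrite (le_trans _ (_ : 1 <= _)) ?ler1n // expr2 mulr_ile1 ?haar_weight_ge0.
Qed.

End HaarWeight.

Theorem mainTheorem6 (R : realType) (S : nat) (phi : 'M[R]_(2 ^ S))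
    (T : nat) (p : 'I_T -> 'I_(2 ^ S) -> R) (s : nat) :
  (1 <= S)%N ->
  right_stochastic phi ->
  (0 < T)%N ->
  (forall t, in_simplex (p t)) ->
  (1 <= s <= S)%N ->
  \sum_(1 <= l < (2 ^ (S - s)).+1)
     ((#|haar_supp S s l|%:R)^-1 *
        \sum_(j < 2 ^ S) `|@haar_coef R S s l phi j|) *
     Num.sqrt (1 + \sum_(t < T) \sum_(i in haar_supp S s l) p t i)
  <= Num.sqrt ((num_switches phi)%:R) * Num.sqrt ((2 ^ S)%:R + T%:R).
Proof.
move=> _ phi_stoch _ p_simplex /andP[s_gt0 s_le]; set N := (2 ^ (S - s))%N.
pose mass l := 1 + \sum_(t < T) \sum_(i in haar_supp S s l) p t i.
have mass_ge0 l : 0 <= mass l.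
  by rewrite addr_ge0 // !sumr_ge0 // => t _; rewrite sumr_ge0 // => i _; case: (p_simplex t).
apply: (le_trans (sum_mul_le_sqrt_sum_sqr (index_iota 1 N.+1)
  (fun l => haar_weight s l phi) (fun l => Num.sqrt (mass l)))).
apply: ler_pM; rewrite ?sqrtr_ge0 // ler_sqrt ?addr_ge0 ?ler0n //.
- apply: (@le_trans _ _ (\sum_(1 <= l < N.+1)
    (#|[set ik in switches phi | ik.1 \in haar_supp S s l]|%:R : R))).
    rewrite big_nat [leRHS]big_nat; apply: ler_sum => l l_range.
    exact: sqr_haar_weight_le.
  by rewrite -natr_sum ler_nat; apply: sum_card_le_card => ik _; exact: sum_haar_supp_le1.
- under eq_bigr do rewrite sqr_sqrtr //.
  rewrite big_split /= sumr_const_nat subn1 /= exchange_big /=.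
  apply: lerD; first by rewrite ler_nat leq_pexp2l // leq_subr.
  apply: le_trans (_ : \sum_(t < T) 1 <= _); last by rewrite sumr_const card_ord.
  apply: ler_sum => t _; have [p_ge0 p_sum1] := p_simplex t.
  by rewrite -p_sum1 sum_haar_block_le.
Qed.
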